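(* For a prime $p$, integers $M$, $N\ge1$, $s\ge1$ and an integer vector $\mathbf{a}=(a_0,\ldots,a_{s-1})$ let $$S_{s,p}(M,N;\mathbf{a})=\sum_{u=M+1}^{M+N}\mathbf{e}_p\Big(\sum_{j=0}^{s-1}a_j q_p(u+j)\Big).$$ Then for any integer $s\ge1$, $$\max_{\gcd(a_0,\ldots,a_{s-1},p)=1}|S_{s,p}(M,N;\mathbf{a})|\ll s\,p\log p$$ uniformly over integers $M$ and $N$ with $p^2>N\ge1$.
   Context: For a prime $p$ and an integer $u$ with $\gcd(u,p)=1$, the Fermat quotient $q_p(u)$ is the unique integer with $q_p(u)\equiv (u^{p-1}-1)/p \pmod p$ and $0\le q_p(u)\le p-1$; also $q_p(kp)=0$ for all $k\in\mathbb{Z}$. $\mathbf{e}_p(z)=\exp(2\pi i z/p)$. $U\ll V$ means $|U|\le cV$ for some constant $c>0$, which may depend on $s$. *)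

From Stdlib Require Import Reals ZArith Znumtheory List.
Open Scope R_scope.

(* Fermat quotient q_p(u): 0 if p | u, otherwise ((u^(p-1)-1)/p) mod p,
   the unique representative in [0, p-1]. (For p prime and p not dividing u,
   p divides u^(p-1)-1 exactly, so Z.div is exact division.) *)
Definition fermat_q (p u : Z) : Z :=
  if (u mod p =? 0)%Z then 0%Z
  else (((u ^ (p - 1) - 1) / p) mod p)%Z.

Fixpoint rsum (n : nat) (f : nat -> R) : R :=
  match n with
  | O => 0
  | S m => rsum m f + f m
  end.

Fixpoint zsum (n : nat) (f : nat -> Z) : Z :=
  match n with
  | O => 0%Z
  | S m => (zsum m f + f m)%Z
  end.

Definition ep_re (p z : Z) : R := cos (2 * PI * IZR z / IZR p).
Definition ep_im (p z : Z) : R := sin (2 * PI * IZR z / IZR p).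

Definition phase (s : nat) (p : Z) (a : nat -> Z) (u : Z) : Z :=
  zsum s (fun j => (a j * fermat_q p (u + Z.of_nat j))%Z).

Definition S_re (s : nat) (p M N : Z) (a : nat -> Z) : R :=
  rsum (Z.to_nat N) (fun k => ep_re p (phase s p a (M + 1 + Z.of_nat k)%Z)).
Definition S_im (s : nat) (p M N : Z) (a : nat -> Z) : R :=
  rsum (Z.to_nat N) (fun k => ep_im p (phase s p a (M + 1 + Z.of_nat k)%Z)).

Definition S_abs (s : nat) (p M N : Z) (a : nat -> Z) : R :=
  sqrt (S_re s p M N a ^ 2 + S_im s p M N a ^ 2).

Definition gcd_vec (s : nat) (a : nat -> Z) (p : Z) : Z :=
  fold_right Z.gcd p (map a (seq 0 s)).

(* Write [u = v + p t] with [0 <= v < p].  Since [q_p(v + p t) = q_p(v) - t v^(p-2) (mod p)], the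
   phase is linear in [t] along each progression, with slope [B(v) = sum_j a_j (v + j)^(p-2)], so the
   sum over [t < p] is a geometric sum of size [<< 1 / sin(pi B(v) / p)], or [<= p] when [B(v) = 0].
   Clearing denominators turns [B(v) = c (mod p)] into a congruence of degree [s] that is nontrivial
   because some [a_j] is prime to [p]; hence every value [c] is taken by at most [2 s] residues [v],
   and [|S| <= 2 s sum_c min(p, 1 / sin(pi c / p)) << s p log p].  If [p <= s], the trivial bound
   [N < p^2 <= s p] suffices. *)

From Stdlib Require Import Reals ZArith Znumtheory List Lia Lra.
From Stdlib Require Import Classical FunctionalExtensionality.
From mathcomp Require ssrbool eqtype ssrnat div prime binomial.
From Coquelicot Require Complex.

Open Scope Z_scope.

Lemma expn_Nat_pow (a n : nat) : ssrnat.expn a n = Nat.pow a n.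
Proof.
  induction n as [|n IH]; [reflexivity|].
  rewrite ssrnat.expnS, IH, ssrnat.mulnE. reflexivity.
Qed.

Lemma modn_Nat_mod (m d : nat) : (0 < d)%nat -> div.modn m d = Nat.modulo m d.
Proof.
  intros Hd. pose proof (div.divn_eq m d) as E.
  assert (L : (div.modn m d < d)%nat).
  { apply (ssrbool.elimT ssrnat.ltP), div.ltn_pmod, (ssrbool.introT ssrnat.leP). lia. }
  rewrite ssrnat.mulnE, ssrnat.addnE in E.
  apply (Nat.mod_unique m d (div.divn m d)); lia.
Qed.

Lemma prime_nat_of_prime (p : Z) : prime p -> is_true (prime.prime (Z.to_nat p)).
Proof.
  intros Hp. pose proof (prime_ge_2 p Hp).
  apply (ssrbool.introT prime.primeP). split.
  - apply (ssrbool.introT ssrnat.leP). lia.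
  - intros d Hd. destruct (ssrbool.elimT div.dvdnP Hd) as [k Hk].
    rewrite ssrnat.mulnE in Hk.
    assert (Hdiv : (Z.of_nat d | p)) by (exists (Z.of_nat k); lia).
    apply (ssrbool.introT ssrbool.orP).
    destruct (prime_divisors p Hp _ Hdiv) as [E|[E|[E|E]]]; try lia.
    + left. apply (ssrbool.introT eqtype.eqP). lia.
    + right. apply (ssrbool.introT eqtype.eqP). lia.
Qed.

Lemma prime_not_divide_1 p : prime p -> ~ (p | 1).
Proof. intros Hp D. pose proof (prime_ge_2 p Hp). apply Z.divide_pos_le in D; lia. Qed.

Lemma Zpow_mod_prime p u : prime p -> u ^ p mod p = u mod p.
Proof.
  intros Hp. pose proof (prime_ge_2 p Hp).
  pose proof (binomial.fermat_little (Z.to_nat (u mod p)) (prime_nat_of_prime p Hp)) as F.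
  rewrite expn_Nat_pow, !modn_Nat_mod in F by lia.
  apply (f_equal Z.of_nat) in F.
  rewrite !Nat2Z.inj_mod, Nat2Z.inj_pow, !Z2Nat.id in F
    by (try apply Z.mod_pos_bound; lia).
  rewrite Z.mod_pow_l, Z.mod_mod in F by lia. exact F.
Qed.

Lemma Zpow_pred_mod_prime p u : prime p -> u mod p <> 0 -> u ^ (p - 1) mod p = 1.
Proof.
  intros Hp Hu. pose proof (prime_ge_2 p Hp).
  assert (Hd : (p | u * (u ^ (p - 1) - 1))).
  { apply Z.mod_divide; [lia|].
    replace (u * (u ^ (p - 1) - 1)) with (u ^ p - u)
      by (rewrite <- (Z.sub_add 1 p) at 1; rewrite Z.pow_add_r, Z.pow_1_r by lia; ring).
    rewrite Zminus_mod, Zpow_mod_prime, Z.sub_diag by auto. reflexivity. }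
  destruct (prime_mult p Hp _ _ Hd) as [D|[k Hk]].
  - exfalso. apply Hu, Z.mod_divide; [lia|exact D].
  - replace (u ^ (p - 1)) with (1 + k * p) by lia.
    rewrite Z_mod_plus_full. apply Z.mod_small. lia.
Qed.

Lemma pow_add_first_order (u x n : Z) : 0 <= n ->
  exists r, (u + x) ^ (n + 1) = u ^ (n + 1) + (n + 1) * x * u ^ n + x * x * r.
Proof.
  intros Hn. pattern n. apply natlike_ind; [| |exact Hn].
  - exists 0. rewrite Z.add_0_l, !Z.pow_1_r, Z.pow_0_r. ring.
  - intros m Hm [r Hr]. exists (u * r + (m + 1) * u ^ m + x * r).
    replace (Z.succ m + 1) with (Z.succ (m + 1)) by lia.
    rewrite !Z.pow_succ_r, Hr, !Z.pow_add_r, !Z.pow_1_r by lia. unfold Z.succ. ring.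
Qed.

(* By Fermat's little theorem [u ^ (p - 2)] inverts [u] modulo the prime [p]. *)
Definition fermat_inv (p u : Z) : Z := if u mod p =? 0 then 0 else u ^ (p - 2).

(* From [(u + p t)^(p-1) = u^(p-1) - p t u^(p-2) (mod p^2)]. *)
Lemma fermat_q_shift p u t : 2 <= p ->
  fermat_q p (u + p * t) mod p = (fermat_q p u - t * fermat_inv p u) mod p.
Proof.
  intros Hp. unfold fermat_q, fermat_inv.
  rewrite (Z.mul_comm p t), Z_mod_plus_full.
  destruct (u mod p =? 0); [f_equal; ring|].
  destruct (pow_add_first_order u (t * p) (p - 2) ltac:(lia)) as [r Hr].
  replace (p - 2 + 1) with (p - 1) in Hr by lia.
  rewrite Hr, Z.mod_mod by lia.
  replace (u ^ (p - 1) + (p - 1) * (t * p) * u ^ (p - 2) + t * p * (t * p) * r - 1)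
    with ((u ^ (p - 1) - 1) + ((p - 1) * t * u ^ (p - 2) + p * t * t * r) * p) by ring.
  rewrite Z.div_add, Zminus_mod_idemp_l by lia.
  replace ((u ^ (p - 1) - 1) / p + ((p - 1) * t * u ^ (p - 2) + p * t * t * r))
    with ((u ^ (p - 1) - 1) / p - t * u ^ (p - 2) + (t * u ^ (p - 2) + t * t * r) * p) by ring.
  apply Z_mod_plus_full.
Qed.

Definition phase_slope (s : nat) (p : Z) (a : nat -> Z) (u : Z) : Z :=
  zsum s (fun j => a j * fermat_inv p (u + Z.of_nat j)).

Lemma phase_shift s p a u t : 2 <= p ->
  phase s p a (u + p * t) mod p = (phase s p a u - t * phase_slope s p a u) mod p.
Proof.
  intros Hp. unfold phase, phase_slope.
  induction s as [|s IH]; simpl; [f_equal; ring|].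
  rewrite Zplus_mod, IH, Zmult_mod.
  replace (u + p * t + Z.of_nat s) with (u + Z.of_nat s + p * t) by ring.
  rewrite fermat_q_shift, <- Zmult_mod, <- Zplus_mod by lia.
  f_equal. ring.
Qed.

(* Integer polynomial functions of degree at most [d], in Horner form. *)
Inductive polyfun : nat -> (Z -> Z) -> Prop :=
| polyfun_const c : polyfun 0 (fun _ => c)
| polyfun_step d c Q : polyfun d Q -> polyfun (S d) (fun x => c + x * Q x).

Lemma polyfun_ext d P Q : polyfun d P -> (forall x, P x = Q x) -> polyfun d Q.
Proof.
  intros HP E. replace Q with P; [exact HP|].
  apply functional_extensionality. exact E.
Qed.

Lemma polyfun_succ d P : polyfun d P -> polyfun (S d) P.
Proof.
  induction 1 as [c|d c Q HQ IH].
  - apply (polyfun_ext 1 (fun x => c + x * 0)); [|intros; ring].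
    apply polyfun_step, polyfun_const.
  - apply polyfun_step, IH.
Qed.

Lemma polyfun_le d d' P : (d <= d')%nat -> polyfun d P -> polyfun d' P.
Proof. induction 1; auto using polyfun_succ. Qed.

Lemma polyfun_add d P Q : polyfun d P -> polyfun d Q -> polyfun d (fun x => P x + Q x).
Proof.
  intros HP. revert Q.
  induction HP as [c|d c P HP IH]; intros R HR; inversion HR as [c'|d' c' Q HQ]; subst.
  - apply (polyfun_ext 0 (fun _ => c + c')); [apply polyfun_const|reflexivity].
  - apply (polyfun_ext (S d) (fun x => (c + c') + x * (P x + Q x))); [|intros; ring].
    apply polyfun_step, IH, HQ.
Qed.

Lemma polyfun_scale d P k : polyfun d P -> polyfun d (fun x => k * P x).
Proof.
  induction 1 as [c|d c Q HQ IH].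
  - apply polyfun_const.
  - apply (polyfun_ext (S d) (fun x => k * c + x * (k * Q x))); [|intros; ring].
    apply polyfun_step, IH.
Qed.

Lemma polyfun_mul_linear d P m : polyfun d P -> polyfun (S d) (fun x => (x + m) * P x).
Proof.
  intros HP. apply (polyfun_ext (S d) (fun x => m * P x + (0 + x * P x))); [|intros; ring].
  apply polyfun_add; [apply polyfun_succ, polyfun_scale, HP|apply polyfun_step, HP].
Qed.

Lemma polyfun_zsum d n (F : nat -> Z -> Z) : (forall j, (j < n)%nat -> polyfun d (F j)) ->
  polyfun d (fun x => zsum n (fun j => F j x)).
Proof.
  induction n as [|n IH]; intros HF; simpl.
  - apply (polyfun_le 0); [lia|apply polyfun_const].
  - apply polyfun_add; [apply IH; intros; apply HF|apply HF]; lia.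
Qed.

Fixpoint zprod (n : nat) (f : nat -> Z) : Z :=
  match n with O => 1 | S m => zprod m f * f m end.

Lemma polyfun_zprod_linear n (b : nat -> bool) (e : nat -> Z) :
  polyfun n (fun x => zprod n (fun i => if b i then 1 else x + e i)).
Proof.
  induction n as [|n IH]; simpl; [apply polyfun_const|].
  destruct (b n).
  - apply (polyfun_ext _ _ _ (polyfun_succ _ _ IH)). intros; ring.
  - apply (polyfun_ext _ _ _ (polyfun_mul_linear _ _ (e n) IH)). intros; ring.
Qed.

Lemma polyfun_factor d P r : polyfun (S d) P ->
  exists Q, polyfun d Q /\ forall x, P x - P r = (x - r) * Q x.
Proof.
  revert P. induction d as [|d IH]; intros P HP; inversion HP as [|d' c Q HQ]; subst.
  - inversion HQ as [q|]; subst.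
    exists (fun _ => q). split; [apply polyfun_const|intros; ring].
  - destruct (IH Q HQ) as [R [HR ER]].
    exists (fun x => Q x + r * R x). split.
    + apply polyfun_add; [exact HQ|apply polyfun_succ, polyfun_scale, HR].
    + intros x. transitivity ((x - r) * Q x + r * (Q x - Q r)); [ring|]. rewrite ER. ring.
Qed.

Fixpoint count_lt (n : nat) (f : nat -> bool) : nat :=
  match n with O => O | S m => (count_lt m f + if f m then 1 else 0)%nat end.

Lemma count_lt_ext n f g : (forall k, (k < n)%nat -> f k = g k) -> count_lt n f = count_lt n g.
Proof. induction n; intros E; simpl; auto. rewrite IHn, E; auto. Qed.

Lemma count_lt_false n : count_lt n (fun _ => false) = 0%nat.
Proof. induction n; simpl; lia. Qed.

Lemma count_lt_or n f g h : (forall k, (k < n)%nat -> f k = true -> g k = true \/ h k = true) ->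
  (count_lt n f <= count_lt n g + count_lt n h)%nat.
Proof.
  induction n as [|n IH]; intros H; simpl; [lia|].
  specialize (IH (fun k Hk => H k ltac:(lia))).
  destruct (f n) eqn:E; [destruct (H n ltac:(lia) E) as [G|G]; rewrite G|];
    destruct (g n), (h n); lia.
Qed.

Lemma count_lt_pos n f : (0 < count_lt n f)%nat <-> exists k, (k < n)%nat /\ f k = true.
Proof.
  induction n as [|n IH]; simpl; split.
  - lia.
  - intros [k [Hk _]]. lia.
  - destruct (f n) eqn:E; [exists n; auto|].
    intros Hc. destruct (proj1 IH ltac:(lia)) as [k Hk]. exists k. split; [lia|apply Hk].
  - intros [k [Hk Fk]]. destruct (Nat.eq_dec k n) as [->|].
    + rewrite Fk. lia.
    + enough (0 < count_lt n f)%nat by lia. apply IH. exists k. split; [lia|exact Fk].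
Qed.

Lemma count_lt_le1 n f : (forall k k', (k < n)%nat -> (k' < n)%nat -> f k = true -> f k' = true -> k = k') ->
  (count_lt n f <= 1)%nat.
Proof.
  induction n as [|n IH]; intros H; simpl; [lia|].
  destruct (f n) eqn:E.
  - enough (count_lt n f = 0)%nat by lia.
    destruct (count_lt n f) eqn:C; [reflexivity|].
    destruct (proj1 (count_lt_pos n f) ltac:(lia)) as [k [Hk Fk]].
    assert (k = n) by (apply H; auto; lia). lia.
  - enough (count_lt n f <= 1)%nat by lia. apply IH. intros; apply H; auto; lia.
Qed.

Lemma count_lt_exists_le n m (F : nat -> nat -> bool) :
  (forall j, (j < m)%nat -> (count_lt n (fun v => F v j) <= 1)%nat) ->
  (count_lt n (fun v => Nat.ltb 0 (count_lt m (F v))) <= m)%nat.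
Proof.
  induction m as [|m IH]; intros H.
  - rewrite (count_lt_ext _ _ (fun _ => false)), count_lt_false by reflexivity. lia.
  - eapply Nat.le_trans.
    + apply (count_lt_or _ _ (fun v => Nat.ltb 0 (count_lt m (F v))) (fun v => F v m)).
      intros k _ Hk. simpl in Hk. apply Nat.ltb_lt in Hk.
      destruct (F k m); [now right|left]. apply Nat.ltb_lt. lia.
    + specialize (IH (fun j Hj => H j ltac:(lia))). specialize (H m ltac:(lia)). lia.
Qed.

Lemma divide_diff_small p x y : 0 <= x < p -> 0 <= y < p -> (p | x - y) -> x = y.
Proof. intros Hx Hy [k Hk]. assert (k = 0 \/ k >= 1 \/ k <= -1) by lia. nia. Qed.

Lemma polyfun_root_count p d P y : prime p -> polyfun d P -> P y mod p <> 0 ->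
  (count_lt (Z.to_nat p) (fun v => (P (Z.of_nat v) mod p =? 0)%Z) <= d)%nat.
Proof.
  intros Hp. pose proof (prime_ge_2 p Hp).
  revert P. induction d as [|d IH]; intros P HP Hy.
  - inversion HP; subst.
    rewrite (count_lt_ext _ _ (fun _ => false)), count_lt_false by (intros; apply Z.eqb_neq; auto).
    lia.
  - set (f := fun v => (P (Z.of_nat v) mod p =? 0)%Z).
    destruct (Nat.eq_dec (count_lt (Z.to_nat p) f) 0) as [C|C]; [lia|].
    destruct (proj1 (count_lt_pos (Z.to_nat p) f) ltac:(lia)) as [r [Hr Pr]].
    apply Z.eqb_eq, Z.mod_divide in Pr; [|lia].
    destruct (polyfun_factor d P (Z.of_nat r) HP) as [Q [HQ EQ]].
    assert (Qy : Q y mod p <> 0).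
    { intros Qy. apply Hy, Z.mod_divide; [lia|]. apply Z.mod_divide in Qy; [|lia].
      replace (P y) with (P (Z.of_nat r) + (y - Z.of_nat r) * Q y) by (rewrite <- EQ; ring).
      apply Z.divide_add_r; [exact Pr|apply Z.divide_mul_r, Qy]. }
    eapply Nat.le_trans.
    + apply (count_lt_or _ _ (fun v => Nat.eqb v r) (fun v => Q (Z.of_nat v) mod p =? 0)).
      intros k Hk Pk. apply Z.eqb_eq, Z.mod_divide in Pk; [|lia].
      assert (D : (p | (Z.of_nat k - Z.of_nat r) * Q (Z.of_nat k)))
        by (rewrite <- EQ; apply Z.divide_sub_r; auto).
      destruct (prime_mult p Hp _ _ D) as [D1|D1].
      * left. apply Nat.eqb_eq. apply divide_diff_small in D1; lia.
      * right. apply Z.eqb_eq, Z.mod_divide; [lia|exact D1].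
    + assert (count_lt (Z.to_nat p) (fun v => Nat.eqb v r) <= 1)%nat.
      { apply count_lt_le1. intros k k' _ _ E1 E2. apply Nat.eqb_eq in E1, E2. lia. }
      specialize (IH Q HQ Qy). lia.
Qed.

Lemma zprod_eq_0 n f i : (i < n)%nat -> f i = 0 -> zprod n f = 0.
Proof.
  induction n as [|n IH]; intros Hi Hf; simpl; [lia|].
  destruct (Nat.eq_dec i n) as [->|]; [rewrite Hf|rewrite IH by lia]; ring.
Qed.

Lemma prime_not_divide_zprod p n f : prime p -> (forall i, (i < n)%nat -> ~ (p | f i)) ->
  ~ (p | zprod n f).
Proof.
  intros Hp. induction n as [|n IH]; intros H; simpl; [apply prime_not_divide_1, Hp|].
  intros D. destruct (prime_mult p Hp _ _ D); [apply IH|apply (H n)]; auto.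
Qed.

Lemma zprod_skip_ge n j f : (n <= j)%nat ->
  zprod n (fun i => if Nat.eqb i j then 1 else f i) = zprod n f.
Proof.
  induction n as [|n IH]; intros H; simpl; [reflexivity|].
  rewrite IH, (proj2 (Nat.eqb_neq n j)) by lia. reflexivity.
Qed.

Lemma zprod_skip_mul n j f : (j < n)%nat ->
  zprod n (fun i => if Nat.eqb i j then 1 else f i) * f j = zprod n f.
Proof.
  induction n as [|n IH]; intros H; simpl; [lia|].
  destruct (Nat.eq_dec j n) as [->|].
  - rewrite Nat.eqb_refl, zprod_skip_ge by lia. ring.
  - rewrite (proj2 (Nat.eqb_neq n j)), <- IH by lia. ring.
Qed.

Lemma zsum_single n F j0 : (j0 < n)%nat -> (forall j, (j < n)%nat -> j <> j0 -> F j = 0) ->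
  zsum n F = F j0.
Proof.
  induction n as [|n IH]; intros Hj H; simpl; [lia|].
  destruct (Nat.eq_dec j0 n) as [->|].
  - enough (zsum n F = 0) by lia.
    clear IH Hj. assert (forall m, (m <= n)%nat -> zsum m F = 0); [|auto].
    induction m; intros Hm; simpl; [reflexivity|]. rewrite IHm, H by lia. reflexivity.
  - rewrite IH, (H n) by (auto; lia). ring.
Qed.

Lemma zsum_mul_r n F k : zsum n F * k = zsum n (fun j => F j * k).
Proof. induction n; simpl; [ring|]. rewrite <- IHn. ring. Qed.

Lemma zsum_mod p n F G : p <> 0 -> (forall j, (j < n)%nat -> F j mod p = G j mod p) ->
  zsum n F mod p = zsum n G mod p.
Proof.
  intros Hp. induction n as [|n IH]; intros H; simpl; [reflexivity|].
  rewrite Zplus_mod, IH, (H n), <- Zplus_mod; auto.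
Qed.

Lemma count_lt_mod_zero_le1 p m : 0 < p ->
  (count_lt (Z.to_nat p) (fun v => ((Z.of_nat v + m) mod p =? 0)%Z) <= 1)%nat.
Proof.
  intros Hp. apply count_lt_le1. intros k k' Hk Hk' E1 E2.
  apply Z.eqb_eq, Z.mod_divide in E1, E2; try lia.
  pose proof (Z.divide_sub_r _ _ _ E1 E2) as D.
  replace (Z.of_nat k + m - (Z.of_nat k' + m)) with (Z.of_nat k - Z.of_nat k') in D by ring.
  apply divide_diff_small in D; lia.
Qed.

Section SlopeLevelSets.
Variables (p M : Z) (s : nat) (a : nat -> Z) (j0 : nat).
Hypothesis Hp : prime p.
Hypothesis Hsp : Z.of_nat s < p.
Hypothesis Hj0 : (j0 < s)%nat.
Hypothesis Ha : a j0 mod p <> 0.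

Let e (i : nat) : Z := M + 1 + Z.of_nat i.
(* [prod_except j x] is the product of the [x + e i], [i < s], [i <> j]; for [j = s] it is the full product. *)
Let prod_except (j : nat) (x : Z) : Z := zprod s (fun i => if Nat.eqb i j then 1 else x + e i).
(* [slope (M + 1 + v) = c] with the denominators [v + e j] cleared. *)
Let level_poly (c x : Z) : Z := zsum s (fun j => a j * prod_except j x) - c * prod_except s x.

Lemma level_poly_polyfun c : polyfun s (level_poly c).
Proof.
  apply (polyfun_ext _ (fun x => zsum s (fun j => a j * prod_except j x) + - c * prod_except s x));
    [|intros; unfold level_poly; ring].
  apply polyfun_add; [apply polyfun_zsum; intros j _|];
    apply polyfun_scale, polyfun_zprod_linear.
Qed.

Lemma level_poly_nonzero c : level_poly c (- e j0) mod p <> 0.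
Proof.
  pose proof (prime_ge_2 p Hp).
  assert (Hvanish : forall j, j <> j0 -> prod_except j (- e j0) = 0).
  { intros j Hj. apply (zprod_eq_0 _ _ j0); [exact Hj0|].
    rewrite (proj2 (Nat.eqb_neq j0 j)) by auto. ring. }
  unfold level_poly.
  rewrite (zsum_single s _ j0 Hj0) by (intros j _ Hj; rewrite Hvanish by exact Hj; ring).
  rewrite (Hvanish s) by lia.
  rewrite Z.mul_0_r, Z.sub_0_r. intros D. apply Z.mod_divide in D; [|lia].
  destruct (prime_mult p Hp _ _ D) as [D1|D1].
  - apply Ha, Z.mod_divide; [lia|exact D1].
  - revert D1. apply prime_not_divide_zprod; [exact Hp|]. intros i Hi.
    destruct (Nat.eqb_spec i j0) as [_|Hne]; [apply prime_not_divide_1, Hp|].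
    unfold e. intros Hdiv. replace (- (M + 1 + Z.of_nat j0) + (M + 1 + Z.of_nat i))
      with (Z.of_nat i - Z.of_nat j0) in Hdiv by ring.
    apply divide_diff_small in Hdiv; lia.
Qed.

Lemma level_poly_root c v : 0 <= c < p ->
  (forall j, (j < s)%nat -> (Z.of_nat v + e j) mod p <> 0) ->
  phase_slope s p a (M + 1 + Z.of_nat v) mod p = c -> level_poly c (Z.of_nat v) mod p = 0.
Proof.
  intros Hc Hgood Hslope. pose proof (prime_ge_2 p Hp).
  set (x := M + 1 + Z.of_nat v) in *.
  assert (Hcleared : (phase_slope s p a x * prod_except s (Z.of_nat v)) mod p
                     = zsum s (fun j => a j * prod_except j (Z.of_nat v)) mod p).
  { unfold phase_slope. rewrite zsum_mul_r. apply zsum_mod; [lia|]. intros j Hj.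
    assert (Hxj : Z.of_nat v + e j = x + Z.of_nat j) by (unfold x, e; ring).
    specialize (Hgood j Hj). rewrite Hxj in Hgood.
    assert (Hfull : prod_except s (Z.of_nat v) = prod_except j (Z.of_nat v) * (x + Z.of_nat j)).
    { unfold prod_except. rewrite zprod_skip_ge, <- (zprod_skip_mul s j), Hxj by lia. reflexivity. }
    rewrite Hfull. unfold fermat_inv. rewrite (proj2 (Z.eqb_neq _ _) Hgood).
    replace (a j * (x + Z.of_nat j) ^ (p - 2) * (prod_except j (Z.of_nat v) * (x + Z.of_nat j)))
      with (a j * prod_except j (Z.of_nat v) * (x + Z.of_nat j) ^ (p - 1))
      by (rewrite <- (Z.sub_add 1 (p - 1)), Z.pow_add_r, Z.pow_1_r by lia;
          replace (p - 1 - 1) with (p - 2) by lia; ring).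
    rewrite Zmult_mod, Zpow_pred_mod_prime, Z.mul_1_r, Z.mod_mod by (auto; lia). reflexivity. }
  unfold level_poly. rewrite Zminus_mod, <- Hcleared, <- Zminus_mod.
  replace (phase_slope s p a x * prod_except s (Z.of_nat v) - c * prod_except s (Z.of_nat v))
    with ((phase_slope s p a x - c) * prod_except s (Z.of_nat v)) by ring.
  rewrite Zmult_mod, Zminus_mod, Hslope, (Z.mod_small c p Hc), Z.sub_diag. reflexivity.
Qed.

(* At most [s] values of [v] make some [M + 1 + v + j] vanish mod [p]; the others are roots of [level_poly c]. *)
Lemma slope_level_count c : 0 <= c < p ->
  (count_lt (Z.to_nat p) (fun v => (phase_slope s p a (M + 1 + Z.of_nat v) mod p =? c)%Z)
   <= 2 * s)%nat.
Proof.
  intros Hc. pose proof (prime_ge_2 p Hp).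
  set (bad := fun v j => ((Z.of_nat v + e j) mod p =? 0)%Z).
  eapply Nat.le_trans.
  - apply (count_lt_or _ _ (fun v => Nat.ltb 0 (count_lt s (bad v)))
                           (fun v => (level_poly c (Z.of_nat v) mod p =? 0)%Z)).
    intros v _ Hv. apply Z.eqb_eq in Hv.
    destruct (Nat.ltb_spec 0 (count_lt s (bad v))) as [|Hnone]; [now left|right].
    apply Z.eqb_eq, level_poly_root; auto. intros j Hj E.
    enough (0 < count_lt s (bad v))%nat by lia.
    apply count_lt_pos. exists j. split; [exact Hj|apply Z.eqb_eq, E].
  - pose proof (count_lt_exists_le (Z.to_nat p) s bad
                  (fun j _ => count_lt_mod_zero_le1 p (e j) ltac:(lia))).
    pose proof (polyfun_root_count p s _ _ Hp (level_poly_polyfun c) (level_poly_nonzero c)).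
    lia.
Qed.
End SlopeLevelSets.

Close Scope Z_scope.
Open Scope R_scope.

Lemma rsum_ext n f g : (forall k, (k < n)%nat -> f k = g k) -> rsum n f = rsum n g.
Proof. induction n; intros E; simpl; auto. rewrite IHn, E; auto. Qed.

Lemma rsum_le n f g : (forall k, (k < n)%nat -> f k <= g k) -> rsum n f <= rsum n g.
Proof.
  induction n as [|n IH]; intros H; simpl; [lra|].
  pose proof (H n ltac:(lia)). pose proof (IH ltac:(auto)). lra.
Qed.

Lemma rsum_const n c : rsum n (fun _ => c) = INR n * c.
Proof. induction n; simpl rsum; [simpl; ring|]. rewrite IHn, S_INR. ring. Qed.

Lemma rsum_plus n f g : rsum n (fun k => f k + g k) = rsum n f + rsum n g.
Proof. induction n; simpl; [ring|]. rewrite IHn. ring. Qed.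

Lemma rsum_scal n f c : rsum n (fun k => c * f k) = c * rsum n f.
Proof. induction n; simpl; [ring|]. rewrite IHn. ring. Qed.

Lemma rsum_add n m f : rsum (n + m) f = rsum n f + rsum m (fun k => f (n + k)%nat).
Proof.
  induction m as [|m IH]; simpl; [rewrite Nat.add_0_r; ring|].
  rewrite Nat.add_succ_r. simpl. rewrite IH. ring.
Qed.

Lemma rsum_shift n f : rsum (S n) f = f O + rsum n (fun k => f (S k)).
Proof. induction n as [|n IH]; [simpl; ring|]. cbn [rsum] in *. rewrite IH. ring. Qed.

Lemma rsum_reflect n f : rsum n f = rsum n (fun k => f (n - S k)%nat).
Proof.
  induction n as [|n IH]; [reflexivity|].
  rewrite (rsum_shift n (fun k => f (S n - S k)%nat)).
  cbn [rsum]. rewrite IH, Nat.sub_1_r. simpl. ring.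
Qed.

Lemma rsum_telescope n f g : (forall t, f t = g t - g (S t)) -> rsum n f = g O - g n.
Proof. intros H. induction n; simpl; [ring|]. rewrite IHn, H. ring. Qed.

Lemma rsum_zero_pad n m f : (n <= m)%nat ->
  rsum n f = rsum m (fun k => if Nat.ltb k n then f k else 0).
Proof.
  induction 1 as [|m Hnm IH].
  - apply rsum_ext. intros k Hk. rewrite (proj2 (Nat.ltb_lt k n)); auto.
  - simpl. rewrite IH, (proj2 (Nat.ltb_ge m n)) by lia. ring.
Qed.

Lemma rsum_block m n h : rsum (m * n) h = rsum m (fun t => rsum n (fun v => h (v + n * t)%nat)).
Proof.
  induction m as [|m IH]; simpl; [reflexivity|].
  rewrite Nat.add_comm, rsum_add, IH. f_equal.
  apply rsum_ext. intros k _. f_equal. lia.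
Qed.

Lemma rsum_swap m n h :
  rsum m (fun t => rsum n (fun v => h t v)) = rsum n (fun v => rsum m (fun t => h t v)).
Proof.
  induction m as [|m IH]; simpl.
  - rewrite rsum_const. ring.
  - rewrite IH, <- rsum_plus. reflexivity.
Qed.

Lemma rsum_down_closed n (cond : nat -> bool) :
  (forall t t', (t <= t')%nat -> cond t' = true -> cond t = true) ->
  exists T, forall f, rsum n (fun t => if cond t then f t else 0) = rsum T f.
Proof.
  intros Hdown. induction n as [|n [T IH]]; [exists O; auto|].
  destruct (cond n) eqn:E.
  - exists (S n). intros f. apply rsum_ext. intros t Ht.
    rewrite (Hdown t n); [reflexivity|lia|exact E].
  - exists T. intros f. cbn [rsum]. rewrite E, IH. ring.
Qed.

Lemma rsum_delta n r F : (r < n)%nat -> rsum n (fun c => if Nat.eqb r c then F c else 0) = F r.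
Proof.
  induction n as [|n IH]; intros Hr; [lia|]. simpl rsum.
  destruct (Nat.eq_dec r n) as [->|].
  - rewrite Nat.eqb_refl, (rsum_ext _ _ (fun _ => 0)), rsum_const; [ring|].
    intros k Hk. rewrite (proj2 (Nat.eqb_neq n k)) by lia. reflexivity.
  - rewrite IH, (proj2 (Nat.eqb_neq r n)) by lia. ring.
Qed.

Lemma rsum_fiber_le n P b (F : nat -> R) (K : nat) :
  (forall v, (v < n)%nat -> (b v < P)%nat) ->
  (forall c, (c < P)%nat -> (count_lt n (fun v => Nat.eqb (b v) c) <= K)%nat) ->
  (forall c, (c < P)%nat -> 0 <= F c) ->
  rsum n (fun v => F (b v)) <= INR K * rsum P F.
Proof.
  intros Hb Hfiber HF.
  assert (E : forall m, (m <= n)%nat -> rsum m (fun v => F (b v))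
            = rsum P (fun c => INR (count_lt m (fun v => Nat.eqb (b v) c)) * F c)).
  { induction m as [|m IH]; intros Hm.
    - simpl. rewrite (rsum_ext _ _ (fun _ => 0)), rsum_const by (intros; simpl; ring). ring.
    - cbn [rsum]. rewrite IH, <- (rsum_delta P (b m) F), <- rsum_plus by (try apply Hb; lia).
      apply rsum_ext. intros c _. cbn [count_lt]. rewrite plus_INR.
      destruct (Nat.eqb (b m) c); simpl; ring. }
  rewrite E, <- rsum_scal by lia. apply rsum_le. intros c Hc.
  apply Rmult_le_compat_r; auto. apply le_INR. auto.
Qed.

Lemma Cmod_pair_triangle a b c d :
  Complex.Cmod (a + c, b + d) <= Complex.Cmod (a, b) + Complex.Cmod (c, d).
Proof. exact (Complex.Cmod_triangle (a, b) (c, d)). Qed.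

Lemma Cmod_rsum_le n f g :
  Complex.Cmod (rsum n f, rsum n g) <= rsum n (fun k => Complex.Cmod (f k, g k)).
Proof.
  induction n; simpl rsum; [rewrite (Complex.Cmod_0 : Complex.Cmod (0, 0) = 0); lra|].
  eapply Rle_trans; [apply Cmod_pair_triangle|lra].
Qed.

Lemma Cmod_pair_le_Rabs x y : Complex.Cmod (x, y) <= Rabs x + Rabs y.
Proof.
  pose proof (Rabs_pos x). pose proof (Rabs_pos y).
  unfold Complex.Cmod. rewrite <- (sqrt_pow2 (Rabs x + Rabs y)) by lra.
  apply sqrt_le_1_alt. simpl fst; simpl snd. rewrite <- (pow2_abs x), <- (pow2_abs y). nra.
Qed.

Lemma Cmod_cos_sin x : Complex.Cmod (cos x, sin x) = 1.
Proof.
  unfold Complex.Cmod. simpl fst; simpl snd. rewrite <- sqrt_1. f_equal.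
  pose proof (sin2_cos2 x). unfold Rsqr in *. lra.
Qed.

Lemma cos_sin_period_Z x k :
  cos (x + 2 * IZR k * PI) = cos x /\ sin (x + 2 * IZR k * PI) = sin x.
Proof.
  destruct (Z_le_gt_dec 0 k) as [Hk|Hk].
  - rewrite <- (Z2Nat.id k), <- INR_IZR_INZ by exact Hk. split; [apply cos_period|apply sin_period].
  - assert (E : x = x + 2 * IZR k * PI + 2 * INR (Z.to_nat (- k)) * PI)
      by (rewrite INR_IZR_INZ, Z2Nat.id, opp_IZR by lia; ring).
    split; rewrite E at 2; symmetry; [apply cos_period|apply sin_period].
Qed.

Lemma ep_mod_eq p z z' : (0 < p)%Z -> (z mod p = z' mod p)%Z ->
  ep_re p z = ep_re p z' /\ ep_im p z = ep_im p z'.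
Proof.
  intros Hp H.
  assert (E : (z = z' + (z / p - z' / p) * p)%Z).
  { pose proof (Z.div_mod z p ltac:(lia)). pose proof (Z.div_mod z' p ltac:(lia)). lia. }
  assert (IP : IZR p <> 0) by (apply not_0_IZR; lia).
  unfold ep_re, ep_im. rewrite E, plus_IZR, mult_IZR.
  replace (2 * PI * (IZR z' + IZR (z / p - z' / p) * IZR p) / IZR p)
    with (2 * PI * IZR z' / IZR p + 2 * IZR (z / p - z' / p) * PI) by (field; auto).
  apply cos_sin_period_Z.
Qed.

Lemma Cmod_ep p z : Complex.Cmod (ep_re p z, ep_im p z) = 1.
Proof. apply Cmod_cos_sin. Qed.

(* Closed forms by telescoping [2 sin(b/2) cos(a - t b) = sin(a - t b + b/2) - sin(a - (t+1) b + b/2)]. *)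
Lemma geometric_cos_sin_sum (al be : R) T : sin (be / 2) <> 0 ->
  rsum T (fun t => cos (al - INR t * be))
    = / (2 * sin (be / 2)) * (sin (al + be / 2) - sin (al - INR T * be + be / 2)) /\
  rsum T (fun t => sin (al - INR t * be))
    = / (2 * sin (be / 2)) * (cos (al - INR T * be + be / 2) - cos (al + be / 2)).
Proof.
  intros Hs.
  assert (Hshift : forall t, al - INR (S t) * be + be / 2 = (al - INR t * be) - be / 2)
    by (intros; rewrite S_INR; lra).
  split.
  - rewrite (rsum_telescope T _ (fun t => / (2 * sin (be / 2)) * sin (al - INR t * be + be / 2))).
    + simpl INR. replace (al - 0 * be + be / 2) with (al + be / 2) by lra. ring.
    + intros t. rewrite Hshift, sin_minus, sin_plus. field. exact Hs.
  - rewrite (rsum_telescope T _ (fun t => - (/ (2 * sin (be / 2)) * cos (al - INR t * be + be / 2)))).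
    + simpl INR. replace (al - 0 * be + be / 2) with (al + be / 2) by lra. ring.
    + intros t. rewrite Hshift, cos_minus, cos_plus. field. exact Hs.
Qed.

Lemma geometric_cos_sin_sum_bound (al be : R) T : 0 < sin (be / 2) ->
  Rabs (rsum T (fun t => cos (al - INR t * be))) <= 1 / sin (be / 2) /\
  Rabs (rsum T (fun t => sin (al - INR t * be))) <= 1 / sin (be / 2).
Proof.
  intros Hs. destruct (geometric_cos_sin_sum al be T ltac:(lra)) as [-> ->].
  assert (Hi : 0 < / (2 * sin (be / 2))) by (apply Rinv_0_lt_compat; lra).
  replace (1 / sin (be / 2)) with (/ (2 * sin (be / 2)) * 2) by (field; lra).
  rewrite !Rabs_mult, (Rabs_pos_eq _ (Rlt_le _ _ Hi)).
  pose proof (SIN_bound (al + be / 2)). pose proof (SIN_bound (al - INR T * be + be / 2)).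
  pose proof (COS_bound (al + be / 2)). pose proof (COS_bound (al - INR T * be + be / 2)).
  split; apply Rmult_le_compat_l; try lra; apply Rabs_le; lra.
Qed.

Lemma sin_ge_linear x : 0 <= x <= 2 -> 2 / 5 * x <= sin x.
Proof.
  intros Hx. pose proof PI2_1.
  destruct (SIN x ltac:(lra) ltac:(lra)) as [L _].
  replace (sin_lb x) with (x - x ^ 3 / 6 + x ^ 5 / 120 - x ^ 7 / 5040) in L
    by (unfold sin_lb, sin_approx, sin_term; simpl; field).
  assert (x ^ 2 <= 4) by nra. assert (x ^ 4 <= 16) by nra. assert (x ^ 6 <= 64) by nra.
  assert (0 <= x ^ 5) by (apply pow_le; lra). nra.
Qed.

Lemma sin_pi_frac_ge m P : 0 < m -> 2 * m <= P -> m / P <= sin (PI * m / P).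
Proof.
  intros Hm HP. pose proof PI2_3_2. pose proof PI_4.
  assert (Hx : PI * m / P = PI * (m / P)) by (field; lra).
  assert (0 < m / P <= 1 / 2)
    by (split; [apply Rdiv_lt_0_compat|apply Rmult_le_reg_r with P; [|field_simplify]]; lra).
  pose proof (sin_ge_linear (PI * m / P) ltac:(rewrite Hx; nra)). rewrite Hx in *. nra.
Qed.

Lemma inv_sin_pi_frac_le (c p : R) : 0 < c < p ->
  0 < sin (PI * c / p) /\ 1 / sin (PI * c / p) <= p / c + p / (p - c).
Proof.
  intros Hc.
  assert (Half : forall m, 0 < m -> 2 * m <= p -> 0 < sin (PI * m / p) /\ 1 / sin (PI * m / p) <= p / m).
  { intros m Hm Hmp. pose proof (sin_pi_frac_ge m p Hm Hmp).
    assert (0 < m / p) by (apply Rdiv_lt_0_compat; lra). split; [lra|].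
    replace (p / m) with (1 / (m / p)) by (field; lra).
    apply Rmult_le_compat_l; [lra|apply Rinv_le_contravar; lra]. }
  assert (0 < p / c) by (apply Rdiv_lt_0_compat; lra).
  assert (0 < p / (p - c)) by (apply Rdiv_lt_0_compat; lra).
  destruct (Rle_dec (2 * c) p).
  - destruct (Half c); [lra|lra|split; lra].
  - replace (PI * c / p) with (PI - PI * (p - c) / p) by (field; lra). rewrite sin_PI_x.
    destruct (Half (p - c)); [lra|lra|split; lra].
Qed.

Lemma ln_le_sub_1 x : 0 < x -> ln x <= x - 1.
Proof. intros Hx. pose proof (exp_ineq1_le (ln x)). rewrite exp_ln in *; lra. Qed.

Lemma inv_succ_le_ln_diff n : 0 < n -> 1 / (n + 1) <= ln (n + 1) - ln n.
Proof.
  intros Hn. pose proof (ln_le_sub_1 (n / (n + 1)) ltac:(apply Rdiv_lt_0_compat; lra)).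
  unfold Rdiv in *. rewrite ln_mult, ln_Rinv in * by (try apply Rinv_0_lt_compat; lra).
  replace (n * / (n + 1) - 1) with (- (1 * / (n + 1))) in * by (field; lra). lra.
Qed.

Lemma harmonic_le_ln n : (1 <= n)%nat -> rsum n (fun k => 1 / INR (S k)) <= 1 + ln (INR n).
Proof.
  induction 1 as [|n Hn IH].
  - simpl. rewrite ln_1. lra.
  - cbn [rsum]. rewrite S_INR.
    pose proof (inv_succ_le_ln_diff (INR n) (lt_0_INR n ltac:(lia))). lra.
Qed.

(* Bound on a sum over a progression whose slope is [c]; for [c = 0] it is the trivial bound. *)
Definition slope_weight (p : R) (c : nat) : R :=
  if Nat.eqb c 0 then p else 2 * (p / INR c + p / (p - INR c)).

Lemma slope_weight_nonneg P c : (c < P)%nat -> 0 <= slope_weight (INR P) c.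
Proof.
  intros Hc. unfold slope_weight. destruct (Nat.eqb_spec c 0); [apply pos_INR|].
  assert (INR c < INR P) by (apply lt_INR; auto).
  assert (0 < INR c) by (apply lt_0_INR; lia).
  assert (0 < INR P / INR c) by (apply Rdiv_lt_0_compat; lra).
  assert (0 < INR P / (INR P - INR c)) by (apply Rdiv_lt_0_compat; lra). lra.
Qed.

Lemma rsum_slope_weight_le P : (2 <= P)%nat ->
  rsum P (slope_weight (INR P)) <= INR P + 4 * INR P * (1 + ln (INR P)).
Proof.
  intros HP. destruct P as [|m]; [lia|].
  set (p := INR (S m)). set (H := rsum m (fun k => 1 / INR (S k))).
  assert (Hp : INR m + 1 = p) by (unfold p; rewrite S_INR; reflexivity).
  assert (Hm : 1 <= INR m) by (apply (le_INR 1); lia).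
  assert (Hreflect : rsum m (fun k => 1 / (p - INR (S k))) = H).
  { rewrite rsum_reflect. apply rsum_ext. intros k Hk.
    rewrite S_INR, minus_INR, S_INR by lia. f_equal. lra. }
  assert (Hsplit : rsum (S m) (slope_weight p)
                   = p + (2 * p * H + 2 * p * rsum m (fun k => 1 / (p - INR (S k))))).
  { rewrite rsum_shift. unfold H. rewrite <- !rsum_scal, <- rsum_plus.
    f_equal. apply rsum_ext. intros k Hk.
    assert (INR (S k) < p) by (unfold p; apply lt_INR; lia).
    assert (0 < INR (S k)) by (apply lt_0_INR; lia).
    unfold slope_weight. cbn [Nat.eqb]. field. lra. }
  assert (HH : H <= 1 + ln p).
  { pose proof (harmonic_le_ln m ltac:(lia)).
    assert (ln (INR m) < ln p) by (apply ln_increasing; lra). unfold H. lra. }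
  fold p. rewrite Hsplit, Hreflect. assert (0 < p) by lra. nra.
Qed.

Lemma Cmod_ep_progression_le p A c T : (0 < c < p)%Z ->
  Complex.Cmod (rsum T (fun t => ep_re p (A - Z.of_nat t * c)),
                rsum T (fun t => ep_im p (A - Z.of_nat t * c)))
  <= 2 * (IZR p / IZR c + IZR p / (IZR p - IZR c)).
Proof.
  intros Hc. assert (Hc' : 0 < IZR c < IZR p) by (split; apply IZR_lt; lia).
  set (al := 2 * PI * IZR A / IZR p). set (be := 2 * PI * IZR c / IZR p).
  assert (Hangle : forall t, 2 * PI * IZR (A - Z.of_nat t * c) / IZR p = al - INR t * be).
  { intros t. unfold al, be. rewrite minus_IZR, mult_IZR, <- INR_IZR_INZ. field. lra. }
  unfold ep_re, ep_im. rewrite (rsum_ext T _ (fun t => cos (al - INR t * be))),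
    (rsum_ext T (fun t => sin _) (fun t => sin (al - INR t * be))) by (intros; rewrite Hangle; reflexivity).
  destruct (inv_sin_pi_frac_le (IZR c) (IZR p) Hc') as [Hpos Hinv].
  replace (PI * IZR c / IZR p) with (be / 2) in Hpos, Hinv by (unfold be; field; lra).
  destruct (geometric_cos_sin_sum_bound al be T Hpos).
  eapply Rle_trans; [apply Cmod_pair_le_Rabs|lra].
Qed.

Lemma Cmod_truncated_ep_sum_le n (cond : nat -> bool) (z : nat -> Z) p :
  Complex.Cmod (rsum n (fun t => if cond t then ep_re p (z t) else 0),
                rsum n (fun t => if cond t then ep_im p (z t) else 0)) <= INR n.
Proof.
  eapply Rle_trans; [apply Cmod_rsum_le|].
  rewrite <- (Rmult_1_r (INR n)), <- rsum_const. apply rsum_le. intros t _.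
  destruct (cond t); [rewrite Cmod_ep|rewrite (Complex.Cmod_0 : Complex.Cmod (0, 0) = 0)]; lra.
Qed.

(* The part of [S] over [u = M + 1 + v + p t] is a truncated geometric sum with ratio [e_p(- slope)]. *)
Lemma Cmod_progression_sum_le s p M a (Nn v : nat) : prime p -> (v < Z.to_nat p)%nat ->
  let P := Z.to_nat p in
  let z t := phase s p a (M + 1 + Z.of_nat (v + P * t)) in
  Complex.Cmod (rsum P (fun t => if Nat.ltb (v + P * t) Nn then ep_re p (z t) else 0),
                rsum P (fun t => if Nat.ltb (v + P * t) Nn then ep_im p (z t) else 0))
  <= slope_weight (INR P) (Z.to_nat (phase_slope s p a (M + 1 + Z.of_nat v) mod p)).
Proof.
  intros Hp Hv P z. pose proof (prime_ge_2 p Hp).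
  set (x := (M + 1 + Z.of_nat v)%Z). set (c := (phase_slope s p a x mod p)%Z).
  assert (Hc : (0 <= c < p)%Z) by (apply Z.mod_pos_bound; lia).
  assert (HP : INR P = IZR p) by (unfold P; rewrite INR_IZR_INZ, Z2Nat.id by lia; reflexivity).
  destruct (Z.eq_dec c 0) as [C0|C0].
  { rewrite C0. apply Cmod_truncated_ep_sum_le. }
  assert (Hz : forall t, ep_re p (z t) = ep_re p (phase s p a x - Z.of_nat t * c)
                      /\ ep_im p (z t) = ep_im p (phase s p a x - Z.of_nat t * c)).
  { intros t. apply ep_mod_eq; [lia|]. unfold z.
    replace (M + 1 + Z.of_nat (v + P * t))%Z with (x + p * Z.of_nat t)%Z
      by (unfold x, P; rewrite Nat2Z.inj_add, Nat2Z.inj_mul, Z2Nat.id by lia; ring).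
    rewrite phase_shift, (Zminus_mod _ (Z.of_nat t * c)) by lia.
    unfold c. rewrite Zmult_mod_idemp_r, <- Zminus_mod. reflexivity. }
  assert (Hdown : forall t t', (t <= t')%nat -> Nat.ltb (v + P * t') Nn = true -> Nat.ltb (v + P * t) Nn = true)
    by (intros t t' Ht; rewrite !Nat.ltb_lt; nia).
  destruct (rsum_down_closed P _ Hdown) as [T HT]. rewrite !HT.
  rewrite (rsum_ext T (fun t => ep_re p (z t)) (fun t => ep_re p (phase s p a x - Z.of_nat t * c))),
    (rsum_ext T (fun t => ep_im p (z t)) (fun t => ep_im p (phase s p a x - Z.of_nat t * c)))
    by (intros t _; apply Hz).
  eapply Rle_trans; [apply Cmod_ep_progression_le; lia|].
  unfold slope_weight. rewrite (proj2 (Nat.eqb_neq _ 0)) by lia.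
  rewrite HP, INR_IZR_INZ, Z2Nat.id by lia. lra.
Qed.

Lemma S_abs_le_length s p M N a : S_abs s p M N a <= INR (Z.to_nat N).
Proof.
  unfold S_abs, S_re, S_im. change (sqrt (?x ^ 2 + ?y ^ 2)) with (Complex.Cmod (x, y)).
  rewrite <- (Rmult_1_r (INR _)), <- rsum_const.
  eapply Rle_trans; [apply Cmod_rsum_le|]. apply rsum_le. intros k _. rewrite Cmod_ep. lra.
Qed.

Lemma rsum_progressions (P Nn : nat) f : (Nn <= P * P)%nat ->
  rsum Nn f = rsum P (fun v => rsum P (fun t => if Nat.ltb (v + P * t) Nn then f (v + P * t)%nat else 0)).
Proof. intros H. rewrite (rsum_zero_pad Nn (P * P) f H), rsum_block. apply rsum_swap. Qed.

Lemma S_abs_le_slope_weights s p M N a : prime p -> (N <= p * p)%Z ->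
  S_abs s p M N a
  <= rsum (Z.to_nat p) (fun v =>
       slope_weight (INR (Z.to_nat p)) (Z.to_nat (phase_slope s p a (M + 1 + Z.of_nat v) mod p))).
Proof.
  intros Hp HN. pose proof (prime_ge_2 p Hp).
  assert (HNP : (Z.to_nat N <= Z.to_nat p * Z.to_nat p)%nat) by nia.
  unfold S_abs, S_re, S_im. change (sqrt (?x ^ 2 + ?y ^ 2)) with (Complex.Cmod (x, y)).
  rewrite !(rsum_progressions _ _ _ HNP).
  eapply Rle_trans; [apply Cmod_rsum_le|].
  apply rsum_le. intros v Hv. apply Cmod_progression_sum_le; auto.
Qed.

Lemma divide_fold_gcd p l : (forall x, In x l -> (p | x)%Z) -> (p | fold_right Z.gcd p l)%Z.
Proof.
  induction l as [|x l IH]; intros H; simpl; [apply Z.divide_refl|].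
  apply Z.gcd_greatest; [apply H; left|apply IH; intros; apply H; right]; auto.
Qed.

Lemma gcd_vec_coprime_witness s a p : prime p -> gcd_vec s a p = 1%Z ->
  exists j0, (j0 < s)%nat /\ (a j0 mod p <> 0)%Z.
Proof.
  intros Hp Hg. pose proof (prime_ge_2 p Hp).
  apply not_all_not_ex. intros Hall.
  apply (prime_not_divide_1 p Hp). rewrite <- Hg. apply divide_fold_gcd.
  intros x Hx. apply in_map_iff in Hx as [j [<- Hj]]. apply in_seq in Hj.
  apply Z.mod_divide; [lia|]. apply NNPP. intros Hnz. apply (Hall j). split; [lia|exact Hnz].
Qed.

Lemma S_abs_le_of_prime_le s p M N a : (0 <= N < p * p)%Z -> (0 <= p <= Z.of_nat s)%Z ->
  S_abs s p M N a <= IZR p * INR s.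
Proof.
  intros HN Hps. eapply Rle_trans; [apply S_abs_le_length|].
  rewrite !INR_IZR_INZ, Z2Nat.id, <- mult_IZR by lia. apply IZR_le. nia.
Qed.

Lemma S_abs_le_of_prime_gt s p M N a : prime p -> (N < p * p)%Z -> (Z.of_nat s < p)%Z ->
  gcd_vec s a p = 1%Z ->
  S_abs s p M N a <= 2 * INR s * (IZR p + 4 * IZR p * (1 + ln (IZR p))).
Proof.
  intros Hp HN Hsp Hg. pose proof (prime_ge_2 p Hp).
  destruct (gcd_vec_coprime_witness s a p Hp Hg) as [j0 [Hj0 Ha]].
  set (slope v := Z.to_nat (phase_slope s p a (M + 1 + Z.of_nat v) mod p)).
  assert (Hslope : forall v, (slope v < Z.to_nat p)%nat).
  { intros v. pose proof (Z.mod_pos_bound (phase_slope s p a (M + 1 + Z.of_nat v)) p ltac:(lia)).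
    unfold slope. lia. }
  assert (Hfibers : forall c, (c < Z.to_nat p)%nat ->
            (count_lt (Z.to_nat p) (fun v => Nat.eqb (slope v) c) <= 2 * s)%nat).
  { intros c Hc. rewrite (count_lt_ext _ _
      (fun v => (phase_slope s p a (M + 1 + Z.of_nat v) mod p =? Z.of_nat c)%Z)).
    - apply (slope_level_count p M s a j0); auto; lia.
    - intros v _. pose proof (Z.mod_pos_bound (phase_slope s p a (M + 1 + Z.of_nat v)) p ltac:(lia)).
      apply Bool.eq_iff_eq_true. rewrite Nat.eqb_eq, Z.eqb_eq. unfold slope. lia. }
  pose proof (rsum_fiber_le (Z.to_nat p) (Z.to_nat p) slope (slope_weight (INR (Z.to_nat p))) (2 * s)
    (fun v _ => Hslope v) Hfibers (fun c Hc => slope_weight_nonneg _ _ Hc)) as Hsum.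
  pose proof (rsum_slope_weight_le (Z.to_nat p) ltac:(lia)) as Hw.
  assert (HP : INR (Z.to_nat p) = IZR p) by (rewrite INR_IZR_INZ, Z2Nat.id by lia; reflexivity).
  eapply Rle_trans; [apply S_abs_le_slope_weights; auto; lia|].
  eapply Rle_trans; [exact Hsum|].
  rewrite mult_INR, <- HP. simpl (INR 2).
  apply Rmult_le_compat_l; [pose proof (pos_INR s); lra|exact Hw].
Qed.

Theorem theorem11 :
  forall s : nat, (1 <= s)%nat ->
  exists c : R, 0 < c /\
    forall (p M N : Z) (a : nat -> Z),
      prime p ->
      (1 <= N)%Z -> (N < p ^ 2)%Z ->
      gcd_vec s a p = 1%Z ->
      S_abs s p M N a <= c * INR s * IZR p * ln (IZR p).
Proof.
  intros s Hs. exists 30. split; [lra|]. intros p M N a Hp HN1 HN2 Hg.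
  pose proof (prime_ge_2 p Hp). rewrite Z.pow_2_r in HN2.
  assert (Hln : / 2 < ln (IZR p)).
  { pose proof ln_lt_2. destruct (Z.eq_dec p 2) as [->|]; [lra|].
    assert (ln 2 < ln (IZR p)) by (apply ln_increasing; [lra|apply IZR_lt; lia]). lra. }
  assert (Hps : 0 < IZR p * INR s)
    by (apply Rmult_lt_0_compat; [apply IZR_lt|apply lt_0_INR]; lia).
  assert (IZR p * INR s <= 2 * (IZR p * INR s) * ln (IZR p)) by nra.
  destruct (Z_le_gt_dec p (Z.of_nat s)).
  - pose proof (S_abs_le_of_prime_le s p M N a ltac:(lia) ltac:(lia)). nra.
  - pose proof (S_abs_le_of_prime_gt s p M N a Hp HN2 ltac:(lia) Hg). nra.
Qed.
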